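(* Let $(P,h)$ be a minimal floor plan. Then $B(P,h)\subseteq P$. In particular, if $(P,Q,h)$ is a minimal compatible floor plan, then $B(P,h)\subseteq P$ and $B(Q,h)\subseteq Q$.
   Context: A floor plan is a pair $(P,h)$ of sequences $P=(p_1,\dots,p_r)$, $p_i\in\mathbb{N}^2$, and $h=(h_1,\dots,h_r)$, $h_i$ positive integers; a compatible floor plan is a triple $(P,Q,h)$ with $(P,h),(Q,h)$ floor plans. ''$q\in P$'' means $q=p_i$ for some $i$. A North-East path is a sequence $(q_1,\dots,q_m)$ in $\mathbb{N}^2$ with $q_{j+1}-q_j\in\{(1,0),(0,1)\}$, originating at $q_1$; its score w.r.t. $(P,h)$ is $\sum_{i:\,p_i\in\{q_1,\dots,q_m\}}h_i$, and $\max\mathrm{score}_{(P,h)}(q)$ is the maximal score of a path originating at $q$. Let $\lambda_{(P,h)}=\{(x,y,z)\in\mathbb{N}^3: z<\max\mathrm{score}_{(P,h)}(x,y)\}$. For floor plans with the same $h$: $(P',h)\le(P,h)$ iff $\lambda_{(P',h)}\subseteq\lambda_{(P,h)}$. For compatible floor plans with the same $h$: $(P',Q',h)\le(P,Q,h)$ iff $\lambda_{(P',h)}\subseteq\lambda_{(P,h)}$, $\lambda_{(Q',h)}\subseteq\lambda_{(Q,h)}$, and $|\lambda_{(P',h)}\cap\lambda_{(Q',h)}|\le|\lambda_{(P,h)}\cap\lambda_{(Q,h)}|$. A (compatible) floor plan is minimal if it is minimal for these relations, i.e. there is no other one with the same $h$ that is $\le$ it but not $\ge$ it. The support is $\mathrm{supp}(P,h)=\{q\in\mathbb{N}^2:\max\mathrm{score}_{(P,h)}(q)>0\}$,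 and the border $B(P,h)$ is the set of $q\in\mathrm{supp}(P,h)$ such that $q+(1,0)\notin\mathrm{supp}(P,h)$ or $q+(0,1)\notin\mathrm{supp}(P,h)$. *)

From mathcomp Require Import all_boot.
From mathcomp Require Import boolp.

Set Implicit Arguments.
Unset Strict Implicit.
Unset Printing Implicit Defensive.

Definition pt := (nat * nat)%type.

Definition floor_plan (P : seq pt) (h : seq nat) : Prop :=
  size P = size h /\ all (fun k => 0 < k) h.

Definition ne_step (a b : pt) : bool :=
  (b == (a.1.+1, a.2)) || (b == (a.1, a.2.+1)).

(* A North-East path (q_1, ..., q_m) is encoded as q_1 = q and
   (q_2, ..., q_m) = s; it originates at q. *)
Definition ne_path (q : pt) (s : seq pt) : bool := path ne_step q s.

Definition score (P : seq pt) (h : seq nat) (q : pt) (s : seq pt) : nat :=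
  \sum_(i < size P | nth (0, 0) P i \in q :: s) nth 0 h i.

(* maximal score of a NE path originating at q.  All scores are <= sum of h,
   so the maximum is taken over the (nonempty) set of achieved values below that bound. *)
Definition maxscore (P : seq pt) (h : seq nat) (q : pt) : nat :=
  \max_(v < (sumn h).+1 |
        `[< exists s : seq pt, ne_path q s /\ score P h q s = v >]) v.

Definition lambda (P : seq pt) (h : seq nat) (t : nat * nat * nat) : Prop :=
  t.2 < maxscore P h (t.1.1, t.1.2).

Definition subset3 (A B : nat * nat * nat -> Prop) : Prop :=
  forall t, A t -> B t.

Definition has_card (A : nat * nat * nat -> Prop) (n : nat) : Prop :=
  exists s : seq (nat * nat * nat),
    uniq s /\ (forall t, t \in s <-> A t) /\ size s = n.

Definition card_le (A B : nat * nat * nat -> Prop) : Prop :=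
  forall n m, has_card A n -> has_card B m -> n <= m.

Definition inter3 (A B : nat * nat * nat -> Prop) t : Prop := A t /\ B t.

Definition fp_le (P' P : seq pt) (h : seq nat) : Prop :=
  subset3 (lambda P' h) (lambda P h).

Definition cfp_le (P' Q' P Q : seq pt) (h : seq nat) : Prop :=
  subset3 (lambda P' h) (lambda P h) /\
  subset3 (lambda Q' h) (lambda Q h) /\
  card_le (inter3 (lambda P' h) (lambda Q' h)) (inter3 (lambda P h) (lambda Q h)).

Definition minimal_fp (P : seq pt) (h : seq nat) : Prop :=
  floor_plan P h /\
  forall P', floor_plan P' h -> fp_le P' P h -> fp_le P P' h.

Definition minimal_cfp (P Q : seq pt) (h : seq nat) : Prop :=
  floor_plan P h /\ floor_plan Q h /\
  forall P' Q', floor_plan P' h -> floor_plan Q' h ->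
    cfp_le P' Q' P Q h -> cfp_le P Q P' Q' h.

Definition supp (P : seq pt) (h : seq nat) (q : pt) : Prop :=
  0 < maxscore P h q.

Definition border (P : seq pt) (h : seq nat) (q : pt) : Prop :=
  supp P h q /\ (~ supp P h (q.1.+1, q.2) \/ ~ supp P h (q.1, q.2.+1)).

From mathcomp Require Import all_boot boolp.
From mathcomp Require Import zify.

(* Suppose q lies on the border of (P,h) but not in P, say with q + (0,1)
   outside the support (the other case is the transpose).  Then every point of
   P weakly north-east of q lies on the row of q, to its right.  Moving one such
   point p_j onto q does not enlarge lambda: a path through q can instead
   continue along that row and collect every point it could have collected.
   But it strictly lowers the maximal score at p_j, since q is no longer
   reachable from p_j.  So (P,h) is not minimal.  A minimal compatible floor
   plan (P,Q,h) has (P,h) and (Q,h) minimal, because shrinking lambda_P also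
   shrinks its intersection with lambda_Q. *)

Set Implicit Arguments.
Unset Strict Implicit.
Unset Printing Implicit Defensive.

Lemma sum_nth_le_sumn (h : seq nat) n : \sum_(0 <= i < n) nth 0 h i <= sumn h.
Proof.
elim: h n => [|a h IH] n.
  by rewrite big1 // => i _; rewrite nth_nil.
case: n => [|n]; first by rewrite big_geq.
by rewrite big_nat_recl //= leq_add2l.
Qed.

Lemma score_le_sumn (P : seq pt) (h : seq nat) (q : pt) (s : seq pt) :
  score P h q s <= sumn h.
Proof.
rewrite /score big_mkcond /=; apply: leq_trans (sum_nth_le_sumn h (size P)).
by rewrite big_mkord; apply: leq_sum => i _; case: ifP.
Qed.

Lemma score_le_maxscore (P : seq pt) (h : seq nat) (q : pt) (s : seq pt) :
  ne_path q s -> score P h q s <= maxscore P h q.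
Proof.
move=> qs; have lt_score : score P h q s < (sumn h).+1 by rewrite ltnS score_le_sumn.
apply: (@leq_bigmax_cond _ _ (fun v : 'I_(sumn h).+1 => nat_of_ord v) (Ordinal lt_score)).
by apply: asboolT; exists s.
Qed.

Lemma maxscore_le (P : seq pt) (h : seq nat) (q : pt) (m : nat) :
  (forall s, ne_path q s -> score P h q s <= m) -> maxscore P h q <= m.
Proof. by move=> le_m; apply/bigmax_leqP => v /asboolP [s [qs <-]]; apply: le_m. Qed.

Lemma ne_path_ge (q : pt) (s : seq pt) (x : pt) :
  ne_path q s -> x \in q :: s -> q.1 <= x.1 /\ q.2 <= x.2.
Proof.
elim: s q => [|b s IH] q /=; first by rewrite inE => _ /eqP ->.
case/andP => qb bs; rewrite inE => /orP [/eqP -> //|/(IH _ bs) [le1 le2]].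
by case/orP: qb => /eqP Eb; rewrite Eb /= in le1 le2; lia.
Qed.

Lemma ne_path_reach (r t : pt) : r.1 <= t.1 -> r.2 <= t.2 ->
  exists s, ne_path r s /\ last r s = t.
Proof.
move Hn: (t.1 - r.1 + (t.2 - r.2)) => n.
elim: n t Hn => [|n IH] [a b] /= Hn le1 le2.
  by exists [::]; split => //=; case: r le1 le2 Hn => ? ? /= *; congr pair; lia.
have [t' [Et' le1' le2' Hn']] : exists t' : pt, [/\ ne_step t' (a, b),
    r.1 <= t'.1, r.2 <= t'.2 & t'.1 - r.1 + (t'.2 - r.2) = n].
  have [lt2|ge2] := ltnP r.2 b.
    by exists (a, b.-1); rewrite /ne_step /= !xpair_eqE; split => //=; lia.
  exists (a.-1, b); rewrite /ne_step /= !xpair_eqE; split => //=; lia.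
have [s [rs Es]] := IH t' Hn' le1' le2'.
exists (rcons s (a, b)).
by rewrite /ne_path rcons_path last_rcons Es; split => //; apply/andP.
Qed.

Fixpoint row_path (p : pt) (n : nat) : seq pt :=
  if n is n'.+1 then (p.1.+1, p.2) :: row_path (p.1.+1, p.2) n' else [::].

Lemma ne_path_row (p : pt) (n : nat) : ne_path p (row_path p n).
Proof. by elim: n p => [|n IH] p //=; rewrite IH andbT /ne_step eqxx. Qed.

Lemma mem_row_path (p : pt) (n : nat) (x : pt) :
  x.2 = p.2 -> p.1 <= x.1 <= p.1 + n -> x \in p :: row_path p n.
Proof.
case: x => a b /= ->; elim: n p => [|n IH] [c d] /= le_ca.
  by rewrite inE xpair_eqE eqxx andbT; apply/eqP; lia.
have [-> //|ne_ca] := eqVneq a c; first by rewrite mem_head.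
by rewrite inE; apply/orP; right; apply: (IH (c.+1, d)) => /=; lia.
Qed.

Lemma nth_le_score (P : seq pt) (h : seq nat) (q : pt) (s : seq pt) (k : nat) :
  k < size P -> nth (0, 0) P k \in q :: s -> nth 0 h k <= score P h q s.
Proof. by move=> lt_k Pk; rewrite /score (bigD1 (Ordinal lt_k)) ?leq_addr. Qed.

Lemma nth_le_maxscore (P : seq pt) (h : seq nat) (r : pt) (k : nat) : k < size P ->
  r.1 <= (nth (0, 0) P k).1 -> r.2 <= (nth (0, 0) P k).2 ->
  nth 0 h k <= maxscore P h r.
Proof.
move=> lt_k le1 le2; have [s [rs Es]] := ne_path_reach le1 le2.
apply: leq_trans (score_le_maxscore P h rs).
by apply: nth_le_score => //; rewrite -Es mem_last.
Qed.

Lemma score_le_of_mem (P P' : seq pt) (h : seq nat) (r r' : pt) (s t : seq pt) :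
  size P' = size P ->
  (forall k, k < size P -> nth (0, 0) P' k \in r :: s -> nth (0, 0) P k \in r' :: t) ->
  score P' h r s <= score P h r' t.
Proof.
move=> eq_size sub; rewrite /score eq_size big_mkcond [leqRHS]big_mkcond.
by apply: leq_sum => k _; case: ifP => // /sub ->.
Qed.

Lemma fp_leP (P' P : seq pt) (h : seq nat) :
  fp_le P' P h <-> forall r, maxscore P' h r <= maxscore P h r.
Proof.
split=> [le r | le [[x y] z] lt_z]; last exact: leq_trans lt_z (le _).
case: (posnP (maxscore P' h r)) => [-> //|pos].
have := le (r.1, r.2, (maxscore P' h r).-1); rewrite /lambda /= -surjective_pairing.
by rewrite prednK // leqnn => /(_ isT).
Qed.

Lemma supp_dominated (P : seq pt) (h : seq nat) (q : pt) : supp P h q ->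
  exists2 k, k < size P & q.1 <= (nth (0, 0) P k).1 /\ q.2 <= (nth (0, 0) P k).2.
Proof.
rewrite /supp; case: (pickP (fun k : 'I_(size P) =>
  (q.1 <= (nth (0, 0) P k).1) && (q.2 <= (nth (0, 0) P k).2))) => [k /andP [] | none].
  by exists k.
suff /eqP -> : maxscore P h q == 0 by [].
rewrite -leqn0; apply: maxscore_le => s qs; rewrite leqn0 /score; apply/eqP.
by apply: big1 => k /(ne_path_ge qs) [le1 le2]; move: (none k); rewrite le1 le2.
Qed.

Section MovePoint.

Variables (P : seq pt) (h : seq nat) (q : pt) (j : nat).
Hypothesis lt_j : j < size P.

Lemma size_move_point : size (set_nth (0, 0) P j q) = size P.
Proof. by rewrite size_set_nth; apply/maxn_idPr. Qed.

Lemma maxscore_move_point_lt (pj := nth (0, 0) P j) :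
  ~ (pj.1 <= q.1 /\ pj.2 <= q.2) ->
  maxscore (set_nth (0, 0) P j q) h pj + nth 0 h j <= maxscore P h pj.
Proof.
move=> not_le; have le_hj := nth_le_maxscore h lt_j (leqnn pj.1) (leqnn pj.2).
rewrite addnC -leq_subRL //; apply: maxscore_le => s pjs.
rewrite leq_subRL //; apply: leq_trans (score_le_maxscore P h pjs).
have q_notin : q \notin pj :: s by apply/negP => /(ne_path_ge pjs).
rewrite /score size_move_point big_mkcond [leqRHS]big_mkcond.
rewrite (bigD1 (Ordinal lt_j)) // [leqRHS](bigD1 (Ordinal lt_j)) //=.
rewrite nth_set_nth /= eqxx (negbTE q_notin) mem_head add0n leq_add2l.
by apply: leq_sum => k; rewrite -val_eqE nth_set_nth /= => /negbTE ->.
Qed.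

Lemma fp_le_move_point :
  (forall k, k < size P -> q.1 <= (nth (0, 0) P k).1 -> q.2 <= (nth (0, 0) P k).2 ->
     (nth (0, 0) P k).2 = q.2) ->
  q.1 <= (nth (0, 0) P j).1 -> q.2 <= (nth (0, 0) P j).2 ->
  fp_le (set_nth (0, 0) P j q) P h.
Proof.
move=> on_row le1 le2; apply/fp_leP => r; apply: maxscore_le => s rs.
have [q_in|q_notin] := boolP (q \in r :: s); last first.
  apply: leq_trans (score_le_maxscore P h rs).
  apply: score_le_of_mem => [|k _]; first exact: size_move_point.
  by rewrite nth_set_nth /=; case: eqP => // _ /(negP q_notin).
case/splitPl: q_in rs => s1 s2 Eq; rewrite /ne_path cat_path Eq => /andP [rs1 qs2].
pose N := \max_(k < size P) (nth (0, 0) P k).1.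
have rt : ne_path r (s1 ++ row_path q N).
  by rewrite /ne_path cat_path rs1 Eq; apply: ne_path_row.
apply: leq_trans (score_le_maxscore P h rt).
have in_row k : k < size P -> q.1 <= (nth (0, 0) P k).1 -> q.2 <= (nth (0, 0) P k).2 ->
    nth (0, 0) P k \in r :: s1 ++ row_path q N.
  move=> lt_k le1k le2k; rewrite -cat_cons mem_cat.
  have : nth (0, 0) P k \in q :: row_path q N.
    apply: mem_row_path; first exact: on_row.
    rewrite le1k (leq_trans _ (leq_addl _ _)) //.
    exact: (leq_bigmax (F := fun k : 'I_(size P) => (nth (0, 0) P k).1) (Ordinal lt_k)).
  by rewrite inE => /orP [/eqP ->|->]; rewrite ?orbT // -Eq mem_last.
apply: score_le_of_mem => [|k lt_k]; first exact: size_move_point.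
rewrite nth_set_nth /=; case: eqP => [-> _|_]; first exact: in_row.
rewrite -cat_cons mem_cat => /orP [in_s1|in_s2]; first by rewrite -cat_cons mem_cat in_s1.
have /(ne_path_ge qs2) [le1k le2k] : nth (0, 0) P k \in q :: s2 by rewrite inE in_s2 orbT.
exact: in_row.
Qed.

End MovePoint.

Definition fp_lt (P' P : seq pt) (h : seq nat) : Prop :=
  fp_le P' P h /\ ~ fp_le P P' h.

Lemma fp_lt_of_top_border (P : seq pt) (h : seq nat) (q : pt) :
  floor_plan P h -> q \notin P ->
  supp P h q -> ~ supp P h (q.1, q.2.+1) ->
  exists2 P', floor_plan P' h & fp_lt P' P h.
Proof.
move=> [eq_size pos_h] q_notin supp_q not_supp_up.
have h_pos k : k < size P -> 0 < nth 0 h k.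
  by move=> lt_k; apply: (allP pos_h); rewrite mem_nth // -eq_size.
have on_row k : k < size P -> q.1 <= (nth (0, 0) P k).1 ->
    q.2 <= (nth (0, 0) P k).2 -> (nth (0, 0) P k).2 = q.2.
  move=> lt_k le1 le2; apply/eqP; rewrite eqn_leq le2 andbT leqNgt; apply/negP => lt2.
  apply: not_supp_up; apply: leq_trans (h_pos k lt_k) _.
  exact: (nth_le_maxscore h lt_k (r := (q.1, q.2.+1))).
have [j lt_j [le1 le2]] := supp_dominated supp_q.
exists (set_nth (0, 0) P j q); first by split; rewrite ?size_move_point.
split; first exact: fp_le_move_point.
have not_le : ~ ((nth (0, 0) P j).1 <= q.1 /\ (nth (0, 0) P j).2 <= q.2).
  case=> ge1 ge2; move/negP: q_notin; apply.
  suff <- : nth (0, 0) P j = q by rewrite mem_nth.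
  by apply: injective_projections; lia.
move/fp_leP/(_ (nth (0, 0) P j)).
by have := maxscore_move_point_lt h lt_j not_le; have := h_pos j lt_j; lia.
Qed.

Definition swap (x : pt) : pt := (x.2, x.1).

Lemma swapK : involutive swap. Proof. by case. Qed.

Lemma ne_step_swap (a b : pt) : ne_step (swap a) (swap b) = ne_step a b.
Proof.
case: a b => a1 a2 [b1 b2]; rewrite /ne_step /swap /= !xpair_eqE orbC.
by rewrite andbC [X in _ || X]andbC.
Qed.

Lemma ne_path_swap (q : pt) (s : seq pt) :
  ne_path (swap q) (map swap s) = ne_path q s.
Proof. by elim: s q => [|b s IH] q //=; rewrite ne_step_swap IH. Qed.

Lemma score_swap (P : seq pt) (h : seq nat) (q : pt) (s : seq pt) :
  score (map swap P) h (swap q) (map swap s) = score P h q s.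
Proof.
rewrite /score size_map; apply: eq_bigl => i.
by rewrite (nth_map (0, 0)) // -map_cons (mem_map (inv_inj swapK)).
Qed.

Lemma maxscore_swap (P : seq pt) (h : seq nat) (q : pt) :
  maxscore (map swap P) h (swap q) = maxscore P h q.
Proof.
apply/eqP; rewrite eqn_leq; apply/andP; split; apply: maxscore_le => s qs.
  rewrite -[s](mapK swapK) score_swap; apply: score_le_maxscore.
  by rewrite -ne_path_swap (mapK swapK).
by rewrite -score_swap; apply: score_le_maxscore; rewrite ne_path_swap.
Qed.

Lemma fp_le_swap (P' P : seq pt) (h : seq nat) :
  fp_le (map swap P') (map swap P) h <-> fp_le P' P h.
Proof.
rewrite !fp_leP; split=> le r; first by rewrite -!(maxscore_swap _ h r).
by rewrite -(swapK r) !maxscore_swap.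
Qed.

Lemma fp_lt_swap (P' P : seq pt) (h : seq nat) :
  fp_lt (map swap P') (map swap P) h <-> fp_lt P' P h.
Proof. by rewrite /fp_lt !fp_le_swap. Qed.

Lemma floor_plan_swap (P : seq pt) (h : seq nat) :
  floor_plan (map swap P) h <-> floor_plan P h.
Proof. by rewrite /floor_plan size_map. Qed.

Lemma fp_lt_of_border_notin (P : seq pt) (h : seq nat) (q : pt) :
  floor_plan P h -> border P h q -> q \notin P ->
  exists2 P', floor_plan P' h & fp_lt P' P h.
Proof.
move=> fpP [supp_q [not_supp_right|not_supp_up]] q_notin; last first.
  exact: fp_lt_of_top_border fpP q_notin supp_q not_supp_up.
have [P' fpP' lt_P'] : exists2 P', floor_plan P' h & fp_lt P' (map swap P) h.
  apply: (@fp_lt_of_top_border _ _ (swap q)).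
  - exact/floor_plan_swap.
  - by rewrite (mem_map (inv_inj swapK)).
  - by rewrite /supp maxscore_swap.
  - by rewrite /supp -[(_, _)]/(swap (q.1.+1, q.2)) maxscore_swap.
exists (map swap P'); first exact/floor_plan_swap.
by rewrite -[P in fp_lt _ P](mapK swapK) fp_lt_swap.
Qed.

Lemma border_sub_minimal_fp (P : seq pt) (h : seq nat) :
  minimal_fp P h -> forall q : pt, border P h q -> q \in P.
Proof.
move=> [fpP minP] q bq; apply: contraT => /(fp_lt_of_border_notin fpP bq).
by case=> P' fpP' [le_P'P []]; apply: minP.
Qed.

Lemma card_le_of_subset (A B : nat * nat * nat -> Prop) :
  subset3 A B -> card_le A B.
Proof.
move=> subAB n m [s [uniq_s [memA <-]]] [t [_ [memB <-]]].
by apply: uniq_leq_size uniq_s _ => x /memA /subAB /memB.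
Qed.

Lemma has_card_interC (A B : nat * nat * nat -> Prop) (n : nat) :
  has_card (inter3 A B) n -> has_card (inter3 B A) n.
Proof.
move=> [s [uniq_s [mem_s <-]]]; exists s; split=> //; split=> // t.
by rewrite mem_s; split=> [] [].
Qed.

Lemma cfp_leC (P' Q' P Q : seq pt) (h : seq nat) :
  cfp_le P' Q' P Q h -> cfp_le Q' P' Q P h.
Proof.
move=> [leP [leQ le_card]]; split=> //; split=> //.
move=> n m /has_card_interC card_n /has_card_interC card_m.
exact: le_card card_n card_m.
Qed.

Lemma minimal_cfpC (P Q : seq pt) (h : seq nat) :
  minimal_cfp P Q h -> minimal_cfp Q P h.
Proof.
move=> [fpP [fpQ minPQ]]; split=> //; split=> // Q' P' fpQ' fpP' /cfp_leC le.
exact/cfp_leC/minPQ.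
Qed.

Lemma minimal_fp_of_cfp (P Q : seq pt) (h : seq nat) :
  minimal_cfp P Q h -> minimal_fp P h.
Proof.
move=> [fpP [fpQ minPQ]]; split=> // P' fpP' le_P'P.
have le : cfp_le P' Q P Q h.
  split=> //; split=> //; apply: card_le_of_subset => t [/le_P'P].
  by split.
by case: (minPQ P' Q fpP' fpQ le).
Qed.

Theorem proposition5p1 :
  (forall (P : seq pt) (h : seq nat),
     minimal_fp P h -> forall q : pt, border P h q -> q \in P) /\
  (forall (P Q : seq pt) (h : seq nat),
     minimal_cfp P Q h ->
     (forall q : pt, border P h q -> q \in P) /\
     (forall q : pt, border Q h q -> q \in Q)).
Proof.
split=> [|P Q h minPQ]; first exact: border_sub_minimal_fp.
split; apply: border_sub_minimal_fp; first exact: minimal_fp_of_cfp minPQ.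
exact: minimal_fp_of_cfp (minimal_cfpC minPQ).
Qed.
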